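(* Let $\gamma=(\alpha,\beta)\in\mathbb N_0^{2n}$ with $\alpha\ge\beta$, and let $y_\pm^{(\ell)}$ be the Commutator Chain of Type II generated by $g_+^\gamma,g_-^\gamma$. Suppose that at least one of the following holds: (a) there is an index $k$ with $\alpha_k+\beta_k\ge2$ and $\alpha_k\neq\beta_k$; (b) there are two distinct indices $k,k'$ with $\alpha_k+\beta_k=\alpha_{k'}+\beta_{k'}=1$. Then for all $\ell\ge0$ and $\sigma\in\{+,-\}$, $\deg(y_\sigma^{(\ell)})=3^\ell(|\gamma|-2)+2$.
   Context: Fix $n\ge 1$. The Weyl algebra $A_n$ is the unital associative $\mathbb{C}$-algebra generated by $a_1,\dots,a_n,a_1^\dagger,\dots,a_n^\dagger$ subject to $[a_i,a_j^\dagger]=\delta_{ij}$ and $[a_i,a_j]=[a_i^\dagger,a_j^\dagger]=0$. For $\gamma=(\alpha,\beta)\in\mathbb N_0^{2n}$ set $a^{\gamma}=(a_1^\dagger)^{\alpha_1}\cdots(a_n^\dagger)^{\alpha_n}a_1^{\beta_1}\cdots a_n^{\beta_n}$; these form a $\mathbb C$-basis; $|\gamma|=\sum_j\alpha_j+\sum_j\beta_j$. For $0\neq g\in A_n$, $\deg(g)$ is the largest $|\gamma|$ with $a^\gamma$ having nonzero coefficient in $g$; $\deg(0)=-\infty$. $\dagger$ is the conjugate-linear anti-automorphism with $(a_j)^\dagger=a_j^\dagger$, $(a_j^\dagger)^\dagger=a_j$. $g_+^\gamma=i((a^\gamma)^\dagger+a^\gamma)$, $g_-^\gamma=(a^\gamma)^\dagger-a^\gamma$.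 The order on $\mathbb N_0^n$ is lexicographic. Commutator Chain of Type II generated by $g_+^\gamma,g_-^\gamma$: $y_\sigma^{(0)}=g_\sigma^\gamma$ for $\sigma\in\{+,-\}$, and $y_\sigma^{(\ell+1)}=[y_\sigma^{(\ell)},[y_+^{(\ell)},y_-^{(\ell)}]]$ for $\ell\ge0$. *)

(* The Weyl algebra A_n over a numeric closed field C
   (e.g. C = algC, or complex R for R : rcfType), modelled concretely on its
   normal-ordered PBW basis a^gamma = (a^dag)^alpha a^beta. *)
From HB Require Import structures.
From mathcomp Require Import all_boot all_order all_algebra.
From mathcomp Require Import finmap.
From mathcomp.multinomials Require Import monalg.

Set Implicit Arguments.
Unset Strict Implicit.
Unset Printing Implicit Defensive.

Import Order.TTheory GRing.Theory Num.Theory.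
Local Open Scope ring_scope.

Section Weyl.
Variables (C : numClosedFieldType) (n : nat).

Definition widx := (n.-tuple nat * n.-tuple nat)%type.

Definition weyl := {malg C[widx]}.

Definition wbasis (g : widx) : weyl := << 1 *g g >>.

Definition wsize (g : widx) : nat := (sumn g.1 + sumn g.2)%N.

(* normal-ordered product of basis elements (Wick / normal-ordering rule):
   a^(al,be) a^(al',be') =
     sum_{kappa, kappa_j <= min(be_j, al'_j)}
        prod_j C(be_j,kappa_j) C(al'_j,kappa_j) kappa_j!  a^(al+al'-kappa, be+be'-kappa)
   which follows from a^q (a^dag)^r = sum_k C(q,k) C(r,k) k! (a^dag)^(r-k) a^(q-k)
   in each mode, different modes commuting. *)
Definition wbprod (u v : widx) : weyl :=
  \sum_(k : {ffun 'I_n -> 'I_(sumn u.2).+1}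
          | [forall j, (k j <= tnth u.2 j)%N && (k j <= tnth v.1 j)%N])
     << (\prod_(j < n) ('C(tnth u.2 j, k j) * 'C(tnth v.1 j, k j) * (k j)`!)%N)%:R
        *g (mktuple (fun j => tnth u.1 j + tnth v.1 j - k j)%N,
            mktuple (fun j => tnth u.2 j + tnth v.2 j - k j)%N) >>.

Definition wmul (p q : weyl) : weyl :=
  \sum_(u <- msupp p) \sum_(v <- msupp q) (p@_u * q@_v) *: wbprod u v.

Definition wcomm (p q : weyl) : weyl := wmul p q - wmul q p.

(* dagger: conjugate-linear anti-automorphism with a_j^dag = a_j^dag;
   on the basis, ((a^dag)^al a^be)^dag = (a^dag)^be a^al. *)
Definition wdag (p : weyl) : weyl :=
  \sum_(u <- msupp p) << (p@_u)^* *g (u.2, u.1) >>.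

Definition gplus (g : widx) : weyl := 'i *: (wdag (wbasis g) + wbasis g).
Definition gminus (g : widx) : weyl := wdag (wbasis g) - wbasis g.

Fixpoint chainII (yp ym : weyl) (l : nat) : weyl * weyl :=
  match l with
  | 0 => (yp, ym)
  | l'.+1 => let: (p, m) := chainII yp ym l' in
             (wcomm p (wcomm p m), wcomm m (wcomm p m))
  end.

(* degree; None plays the role of -infinity (deg 0) *)
Definition wdeg (p : weyl) : option nat :=
  if p == 0 then None else Some (\max_(u <- msupp p) wsize u)%N.

End Weyl.

Definition lex_ge (n : nat) (al be : n.-tuple nat) : Prop :=
  al = be \/
  exists k : 'I_n, (forall j : 'I_n, (j < k)%N -> tnth al j = tnth be j)
                   /\ (tnth be k < tnth al k)%N.

(* Filter the Weyl algebra by total degree.  The top-degree part of a commutator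
   [p, q] cancels, and its part of degree deg p + deg q - 2 is the Poisson bracket
   of the symbols: a^u and a^v contribute the single contractions in one mode j,
   with weight u.2_j v.1_j - v.2_j u.1_j.  Refine the degree by the weight carried
   by a set J of modes (J = {k} in case (a), J = {k, k'} in case (b)).  The leading
   part of y_+ and y_- is then always supported on a pair a^U, (a^U)^dag, with
   coefficient matrix of nonzero determinant; in [y, [y_+, y_-]] the pair's
   Poisson brackets survive and produce a new such pair, whose coefficients are
   multiplied by a nonzero factor.  So the degree follows D -> 3 D - 4 exactly. *)

From HB Require Import structures.
From mathcomp Require Import all_boot all_order all_algebra.
From mathcomp Require Import finmap.
From mathcomp.multinomials Require Import monalg.
From mathcomp Require Import zify ring.
Import Order.TTheory GRing.Theory Num.Theory.
Local Open Scope ring_scope.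

Set Implicit Arguments.
Unset Strict Implicit.
Unset Printing Implicit Defensive.

Section BasisProduct.
Variables (C : numClosedFieldType) (n : nat).
Local Notation idx := (widx n).

Lemma sumn_tnth (t : n.-tuple nat) : sumn t = (\sum_(j < n) tnth t j)%N.
Proof. by rewrite sumnE big_tuple. Qed.

Lemma sumn_mktuple (f : 'I_n -> nat) : sumn (mktuple f) = (\sum_(j < n) f j)%N.
Proof. by rewrite sumn_tnth; apply: eq_bigr => j _; rewrite tnth_mktuple. Qed.

Lemma tnth_sumn_eq0 (t : n.-tuple nat) j : sumn t = 0%N -> tnth t j = 0%N.
Proof. by rewrite sumn_tnth => /eqP; rewrite sum_nat_eq0 => /forallP/(_ j)/eqP. Qed.

Lemma big_subnK (f k : 'I_n -> nat) : (forall j, k j <= f j)%N ->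
  (\sum_(j < n) (f j - k j) + \sum_(j < n) k j = \sum_(j < n) f j)%N.
Proof. by move=> le_kf; rewrite -big_split; apply: eq_bigr => j _; rewrite /= subnK. Qed.

Lemma sum_nat_eq1 (k : 'I_n -> nat) : (\sum_(j < n) k j = 1)%N ->
  exists j, k j = 1%N /\ forall i, i != j -> k i = 0%N.
Proof.
move=> sum1; have [/existsP[j kj_neq0]|/existsPn k0] := boolP [exists j, k j != 0%N]; last first.
  by move: sum1; rewrite big1 // => j _; apply/eqP/negPn.
move: sum1; rewrite (bigD1 j) //=; set rest := (\sum_(i < n | i != j) k i)%N => sum1.
have rest0 : rest = 0%N by move: kj_neq0; rewrite -lt0n; lia.
exists j; split; first by lia.
by move=> i ne_ij; move/eqP: rest0; rewrite sum_nat_eq0 => /forallP/(_ i); rewrite ne_ij => /eqP.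
Qed.

(* The index of the term of a^u a^v in which k_j pairs (a_j, a_j^dag) are
   contracted, as in the definition of [wbprod]. *)
Definition contract (u v : idx) (k : 'I_n -> nat) : idx :=
  (mktuple (fun j => tnth u.1 j + tnth v.1 j - k j)%N,
   mktuple (fun j => tnth u.2 j + tnth v.2 j - k j)%N).

Definition single (j : 'I_n) (i : 'I_n) : nat := (i == j).

Lemma eq_contract u v k k' : k =1 k' -> contract u v k = contract u v k'.
Proof. by move=> eq_k; congr pair; apply: eq_mktuple => j; rewrite eq_k. Qed.

Lemma contractC u v k : contract u v k = contract v u k.
Proof. by congr pair; apply: eq_mktuple => j; rewrite addnC. Qed.

Lemma wsize_contract u v k :
  (forall j, k j <= tnth u.1 j + tnth v.1 j)%N ->
  (forall j, k j <= tnth u.2 j + tnth v.2 j)%N ->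
  (wsize (contract u v k) + 2 * \sum_(j < n) k j = wsize u + wsize v)%N.
Proof.
move=> /big_subnK sub1 /big_subnK sub2.
rewrite /wsize !sumn_mktuple !sumn_tnth !big_split /= in sub1 sub2 *; lia.
Qed.

Definition contr_adm (u v : idx) (k : {ffun 'I_n -> 'I_(sumn u.2).+1}) :=
  [forall j, (k j <= tnth u.2 j)%N && (k j <= tnth v.1 j)%N].

Definition contr_coef (u v : idx) (k : {ffun 'I_n -> 'I_(sumn u.2).+1}) : nat :=
  (\prod_(j < n) ('C(tnth u.2 j, k j) * 'C(tnth v.1 j, k j) * (k j)`!))%N.

Arguments contr_adm : clear implicits.
Arguments contr_coef : clear implicits.

Lemma mcoeff_wbprod (u v w : idx) : (wbprod C u v)@_w =
  \sum_(k | contr_adm u v k) (contr_coef u v k)%:R *+ (contract u v (fun j => k j) == w).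
Proof. by rewrite raddf_sum; apply: eq_bigr => k _; apply: mcoeffU. Qed.

Lemma wsize_contract_adm u v k : contr_adm u v k ->
  (wsize (contract u v (fun j => k j)) + 2 * \sum_(j < n) k j = wsize u + wsize v)%N.
Proof. by move/forallP=> adm_k; apply: wsize_contract => j; have := adm_k j; lia. Qed.

Lemma mcoeff_wbprod_neq0 (u v w : idx) : (wbprod C u v)@_w != 0 ->
  exists t, (wsize w + 2 * t = wsize u + wsize v)%N.
Proof.
rewrite mcoeff_wbprod => /eqP nz0.
have [/existsP[k /andP[adm_k /eqP <-]]|/existsPn none] :=
  boolP [exists k, contr_adm u v k && (contract u v (fun j => k j) == w)].
  by exists (\sum_(j < n) k j)%N; rewrite wsize_contract_adm.
by case: nz0; apply: big1 => k adm_k; have := none k; rewrite adm_k /= => /negbTE ->.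
Qed.

(* Without contraction, a^u a^v is the commutative product. *)
Lemma mcoeff_wbprod_top (u v w : idx) : wsize w = (wsize u + wsize v)%N ->
  (wbprod C u v)@_w = (contract u v (fun _ => 0%N) == w)%:R.
Proof.
move=> size_w; rewrite mcoeff_wbprod.
pose k0 : {ffun 'I_n -> 'I_(sumn u.2).+1} := [ffun => ord0].
have adm0 : contr_adm u v k0 by apply/forallP => j; rewrite ffunE.
rewrite (bigD1 k0) //= big1 ?addr0.
  have -> : contr_coef u v k0 = 1%N.
    by rewrite /contr_coef big1 // => j _; rewrite ffunE /= !bin0 fact0.
  by rewrite (@eq_contract u v _ (fun _ => 0%N)) // => j; rewrite ffunE.
move=> k /andP[adm_k ne_k0]; case: eqP => // contr_w.
have := wsize_contract_adm adm_k; rewrite contr_w size_w => size_k.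
have /eqP : (\sum_(j < n) k j = 0)%N by lia.
rewrite sum_nat_eq0 => /forallP k_0.
by case/eqP: ne_k0; apply/ffunP => j; apply/val_inj; rewrite ffunE /=; apply/eqP/k_0.
Qed.

Section SingleContraction.
Variables (u v w : idx).
Hypothesis size_w : (wsize w + 2 = wsize u + wsize v)%N.

Lemma contr_adm_sum1 k : contr_adm u v k -> contract u v (fun j => k j) = w ->
  (\sum_(j < n) k j = 1)%N.
Proof. by move=> adm_k contr_w; have := wsize_contract_adm adm_k; rewrite contr_w -size_w; lia. Qed.

Lemma mcoeff_wbprod_sub2 : (wbprod C u v)@_w =
  \sum_(j < n) (tnth u.2 j * tnth v.1 j)%:R *+ (contract u v (single j) == w).
Proof.
rewrite mcoeff_wbprod; have [u2_0|u2_gt0] := posnP (sumn u.2).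
  rewrite [RHS]big1 => [|j _]; last by rewrite tnth_sumn_eq0 // mul0n mul0rn.
  apply: big1 => k adm_k; case: eqP => //= /(contr_adm_sum1 adm_k).
  rewrite big1 // => j _; have /forallP/(_ j)/andP[] := adm_k.
  by rewrite tnth_sumn_eq0 // leqn0 => /eqP.
pose kj (j : 'I_n) : {ffun 'I_n -> 'I_(sumn u.2).+1} :=
  [ffun i => if i == j then inord 1 else ord0].
have kjE j i : (kj j i : nat) = single j i.
  by rewrite ffunE /single; case: eqP => _ //=; rewrite inordK //; lia.
have kj_inj : injective kj.
  by move=> j j' eq_kj; have := kjE j j; rewrite eq_kj kjE /single eqxx; case: eqP.
transitivity (\sum_(k | contr_adm u v k) \sum_(j < n)
   ((contr_coef u v k)%:R *+ (contract u v (fun i => k i) == w) *+ (k == kj j) : C)).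
  apply: eq_bigr => k adm_k; case: eqP => /= [contr_w|_]; last first.
    by rewrite big1 // => j _; rewrite mul0rn.
  have [j [kj1 k0]] := sum_nat_eq1 (contr_adm_sum1 adm_k contr_w).
  have -> : k = kj j.
    apply/ffunP => i; apply/val_inj; rewrite /= kjE /single.
    by case: eqP => [->|/eqP /k0] //.
  rewrite (bigD1 j) //= eqxx big1 ?addr0 // => i ne_ij.
  by rewrite (inj_eq kj_inj) eq_sym (negbTE ne_ij).
rewrite exchange_big; apply: eq_bigr => j _.
have contr_kj : contract u v (fun i => kj j i) = contract u v (single j).
  by apply: eq_contract => i; rewrite kjE.
have [adm_kj|nadm_kj] := boolP (contr_adm u v (kj j)).
  rewrite (bigD1 (kj j)) //= eqxx mulr1n big1 ?addr0 => [|k /andP[_ /negbTE ->]] //.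
  rewrite contr_kj /contr_coef (bigD1 j) //= big1 ?muln1 => [|i ne_ij].
    by rewrite kjE /single eqxx /= !bin1 muln1.
  by rewrite kjE /single (negbTE ne_ij) /= !bin0 fact0.
rewrite big1 => [|k adm_k]; last first.
  by case: (k =P kj j) => [eq_k|_]; [move: nadm_kj; rewrite -eq_k adm_k | rewrite mulr0n].
suff -> : (tnth u.2 j * tnth v.1 j = 0)%N by rewrite mul0rn.
apply/eqP; apply: contraNT nadm_kj; rewrite muln_eq0 negb_or -!lt0n => /andP[u2j v1j].
by apply/forallP => i; rewrite kjE /single; case: eqP => [->|] //=; rewrite u2j v1j.
Qed.

End SingleContraction.

End BasisProduct.

Section Bracket.
Variables (C : numClosedFieldType) (n : nat).
Local Notation idx := (widx n).
Local Notation W := (weyl C n).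

Lemma sumr_neq0_exists (I : eqType) (s : seq I) (F : I -> C) :
  \sum_(i <- s) F i != 0 -> exists2 i, i \in s & F i != 0.
Proof.
have [/hasP[i s_i Fi] _|/hasPn F0] := boolP (has (fun i => F i != 0) s); first by exists i.
by rewrite big1_seq ?eqxx // => i /andP[_ /F0 /negPn /eqP].
Qed.

Lemma big_mulrn_eq (I : eqType) (s : seq I) (F : I -> C) (a : I) : uniq s ->
  \sum_(i <- s) F i *+ (i == a) = F a *+ (a \in s).
Proof.
elim: s => [|x s IHs]; first by rewrite big_nil.
rewrite big_cons /= in_cons => /andP[x_s uniq_s]; rewrite IHs //.
have [<-|ne_xa] /= := eqVneq x a; first by rewrite (negbTE x_s) mulr0n addr0.
by rewrite mulr0n add0r.
Qed.

Lemma mcoeff_wmul (p q : W) (w : idx) : (wmul p q)@_w =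
  \sum_(u <- msupp p) \sum_(v <- msupp q) p@_u * q@_v * (wbprod C u v)@_w.
Proof.
rewrite raddf_sum; apply: eq_bigr => u _; rewrite raddf_sum.
by apply: eq_bigr => v _; apply: mcoeffZ.
Qed.

Lemma mcoeff_wcomm (p q : W) (w : idx) : (wcomm p q)@_w =
  \sum_(u <- msupp p) \sum_(v <- msupp q)
     p@_u * q@_v * ((wbprod C u v)@_w - (wbprod C v u)@_w).
Proof.
transitivity ((wmul p q)@_w - (wmul q p)@_w); first exact: mcoeffB.
apply: etrans (f_equal2 (fun a b => a - b) (mcoeff_wmul p q w) (mcoeff_wmul q p w)) _.
rewrite [X in _ - X]exchange_big -sumrB.
by apply: eq_bigr => u _; rewrite -sumrB; apply: eq_bigr => v _; rewrite mulrBr [q@_v * _]mulrC.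
Qed.

Definition wsize_on (J : pred 'I_n) (u : idx) : nat :=
  (\sum_(i < n | J i) (tnth u.1 i + tnth u.2 i))%N.

Lemma wsize_onT (u : idx) : wsize_on predT u = wsize u.
Proof. by rewrite /wsize_on /wsize !sumn_tnth big_split. Qed.

Lemma wsize_on_le J (u : idx) : (wsize_on J u <= wsize u)%N.
Proof. by rewrite -wsize_onT /wsize_on [X in (_ <= X)%N](bigID J) leq_addr. Qed.

Lemma wsize_on_contract1 J (u v : idx) j :
  (1 <= tnth u.1 j + tnth v.1 j)%N -> (1 <= tnth u.2 j + tnth v.2 j)%N ->
  (wsize_on J (contract u v (single j)) + 2 * J j = wsize_on J u + wsize_on J v)%N.
Proof.
move=> uv1 uv2; rewrite /wsize_on -big_split /=.
have termE i : (tnth (contract u v (single j)).1 i + tnth (contract u v (single j)).2 i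
    + 2 * (i == j) = tnth u.1 i + tnth u.2 i + (tnth v.1 i + tnth v.2 i))%N.
  by rewrite !tnth_mktuple /single; case: eqP => [->|_] /=; lia.
have termE' i : i != j -> (tnth (contract u v (single j)).1 i
    + tnth (contract u v (single j)).2 i
    = tnth u.1 i + tnth u.2 i + (tnth v.1 i + tnth v.2 i))%N.
  by move=> ne_ij; have := termE i; rewrite (negbTE ne_ij) muln0 addn0.
case Jj: (J j); last first.
  rewrite muln0 addn0; apply: eq_bigr => i Ji; apply: termE'.
  by apply: contraTneq Ji => ->; rewrite Jj.
rewrite (bigD1 j Jj) [in RHS](bigD1 j Jj) /= (eq_bigr _ (fun i Ji => termE' i (andP Ji).2)).
have := termE j; rewrite eqxx /=; set rest := \big[_/_]_(i | _) _; lia.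
Qed.

Lemma wsize_contract1 (u v : idx) j :
  (1 <= tnth u.1 j + tnth v.1 j)%N -> (1 <= tnth u.2 j + tnth v.2 j)%N ->
  (wsize (contract u v (single j)) + 2 = wsize u + wsize v)%N.
Proof. by move=> uv1 uv2; have := wsize_on_contract1 predT uv1 uv2; rewrite !wsize_onT. Qed.

(* Coefficient of the single contraction in mode j of [a^u, a^v]: the classical
   Poisson bracket of the symbols. *)
Definition pbcoef (u v : idx) j : C :=
  (tnth u.2 j * tnth v.1 j)%:R - (tnth v.2 j * tnth u.1 j)%:R.

Definition pbracket (J : pred 'I_n) (u v w : idx) : C :=
  \sum_(j < n | J j) pbcoef u v j *+ (contract u v (single j) == w).

Lemma pbcoef_neq0 (u v : idx) j : pbcoef u v j != 0 ->
  (1 <= tnth u.1 j + tnth v.1 j)%N /\ (1 <= tnth u.2 j + tnth v.2 j)%N.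
Proof.
rewrite /pbcoef; have [->|] := posnP (tnth u.2 j * tnth v.1 j); last first.
  by rewrite muln_gt0 => /andP[? ?] _; lia.
have [->|] := posnP (tnth v.2 j * tnth u.1 j); first by rewrite subrr eqxx.
by rewrite muln_gt0 => /andP[? ?] _; lia.
Qed.

Lemma mcoeff_wbprodB_high (u v w : idx) : (wsize u + wsize v < wsize w + 2)%N ->
  (wbprod C u v)@_w - (wbprod C v u)@_w = 0.
Proof.
move=> size_w; have [top_w|ntop_w] := eqVneq (wsize w) (wsize u + wsize v)%N.
  rewrite !mcoeff_wbprod_top 1?[contract v u _]contractC ?subrr //; lia.
have mcoeff0 a b : (wsize a + wsize b = wsize u + wsize v)%N -> (wbprod C a b)@_w = 0.
  by move=> size_ab; apply/eqP; apply: contraT => /mcoeff_wbprod_neq0 [t]; lia.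
by rewrite !mcoeff0 ?subrr // addnC.
Qed.

Lemma mcoeff_wbprodB_sub2 (u v w : idx) : (wsize w + 2 = wsize u + wsize v)%N ->
  (wbprod C u v)@_w - (wbprod C v u)@_w = pbracket predT u v w.
Proof.
move=> size_w; have size_w' : (wsize w + 2 = wsize v + wsize u)%N by rewrite [RHS]addnC.
rewrite !mcoeff_wbprod_sub2 // -sumrB.
by apply: eq_bigr => j _; rewrite contractC mulrnBl.
Qed.

End Bracket.

Arguments pbcoef {C n} u v j.
Arguments pbracket {C n} J u v w.

Section Filtration.
Variables (C : numClosedFieldType) (n : nat) (J : pred 'I_n).
Local Notation idx := (widx n).
Local Notation W := (weyl C n).

Definition filtered (p : W) (D M : nat) :=
  forall u, p@_u != 0 -> (wsize u <= D)%N /\ (wsize u = D -> M <= wsize_on J u)%N.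

Definition at_level (D M : nat) (u : idx) := (wsize u == D) && (wsize_on J u == M).

Definition lead_pair (p : W) (D M : nat) (U1 U2 : idx) (c1 c2 : C) :=
  forall u, at_level D M u -> p@_u = c1 *+ (u == U1) + c2 *+ (u == U2).

Lemma at_level_contract1 D M Dv Mv (u v : idx) j : J j ->
  at_level D M u -> at_level Dv Mv v ->
  (1 <= tnth u.1 j + tnth v.1 j)%N -> (1 <= tnth u.2 j + tnth v.2 j)%N ->
  at_level (D + Dv - 2) (M + Mv - 2) (contract u v (single j)).
Proof.
move=> Jj /andP[/eqP size_u /eqP weight_u] /andP[/eqP size_v /eqP weight_v] uv1 uv2.
have := wsize_contract1 uv1 uv2; have := wsize_on_contract1 J uv1 uv2.
by rewrite /at_level Jj; lia.
Qed.

Lemma filtered_wcomm p q Dp Dq Mp Mq :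
  filtered p Dp Mp -> filtered q Dq Mq -> filtered (wcomm p q) (Dp + Dq - 2) (Mp + Mq - 2).
Proof.
move=> fp fq w; rewrite mcoeff_wcomm => /sumr_neq0_exists[u pu /sumr_neq0_exists[v qv]].
rewrite mulf_eq0 negb_or -!mcoeff_neq0 in pu qv * => /andP[_ nz].
have [size_u weight_u] := fp u pu; have [size_v weight_v] := fq v qv.
have size_w : (wsize w + 2 <= wsize u + wsize v)%N.
  by rewrite leqNgt; apply: contra nz => /mcoeff_wbprodB_high ->.
split => [|top_w]; first lia.
have eu : wsize u = Dp by lia.
have ev : wsize v = Dq by lia.
move: nz; rewrite mcoeff_wbprodB_sub2; last lia.
case/sumr_neq0_exists => j _; have [contr_w|] := eqVneq (contract u v (single j)) w.
  rewrite -contr_w mulr1n => /pbcoef_neq0[uv1 uv2].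
  have := wsize_on_contract1 J uv1 uv2; have := weight_u eu; have := weight_v ev.
  by rewrite contr_w; case: (J j) => /=; lia.
by rewrite /= mulr0n eqxx.
Qed.

(* A contraction in mode j lowers the J-weight by 2 (J j), so only pairs of minimal
   J-weight contracted in a mode of J reach the level of w. *)
Lemma mcoeff_wcomm_lead p q Dp Dq Mp Mq w :
  filtered p Dp Mp -> filtered q Dq Mq -> (2 <= Dp + Dq)%N -> (2 <= Mp + Mq)%N ->
  at_level (Dp + Dq - 2) (Mp + Mq - 2) w ->
  (wcomm p q)@_w = \sum_(u <- msupp p) \sum_(v <- msupp q)
     (p@_u * q@_v * pbracket J u v w) *+ (at_level Dp Mp u && at_level Dq Mq v).
Proof.
move=> fp fq D2 M2 /andP[/eqP size_w /eqP weight_w].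
rewrite mcoeff_wcomm; apply: eq_big_seq => u pu; apply: eq_big_seq => v qv.
rewrite -!mcoeff_neq0 in pu qv.
have [size_u weight_u] := fp u pu; have [size_v weight_v] := fq v qv.
have [/andP[/eqP eu /eqP ev]|not_top] := boolP ((wsize u == Dp) && (wsize v == Dq)).
  rewrite mcoeff_wbprodB_sub2 /at_level ?eu ?ev ?eqxx /=; last lia.
  have term_nz j : pbcoef u v j *+ (contract u v (single j) == w) != 0 ->
      [&& J j, wsize_on J u == Mp & wsize_on J v == Mq].
    have [contr_w|] := eqVneq (contract u v (single j)) w; last by rewrite /= mulr0n eqxx.
    rewrite mulr1n => /pbcoef_neq0[uv1 uv2].
    have := wsize_on_contract1 J uv1 uv2; rewrite contr_w weight_w.
    have := weight_u eu; have := weight_v ev.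
    by case: (J j) => /= *; [apply/andP; split; apply/eqP|]; lia.
  have [_|not_lead] := boolP ((wsize_on J u == Mp) && (wsize_on J v == Mq)).
    rewrite mulr1n /pbracket; congr (_ * _); rewrite [RHS]big_mkcond; apply: eq_bigr => j _.
    by case Jj: (J j) => //; apply/eqP; apply: contraT => /term_nz; rewrite Jj.
  rewrite /= mulr0n /pbracket big1 ?mulr0 // => j _; apply/eqP; apply: contraT.
  by move=> /term_nz/and3P[_ wu wv]; rewrite wu wv in not_lead.
rewrite mcoeff_wbprodB_high ?mulr0; last by move: not_top; rewrite negb_and => /orP[] /eqP; lia.
rewrite (_ : _ && _ = false) ?mulr0n //; apply/negbTE; apply: contra not_top.
by rewrite /at_level => /andP[/andP[-> _] /andP[-> _]].
Qed.

Lemma sum_lead_pair (p : W) D M U1 U2 c1 c2 (G : idx -> C) :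
  lead_pair p D M U1 U2 c1 c2 ->
  \sum_(u <- msupp p) (p@_u * G u) *+ at_level D M u =
    (c1 * G U1) *+ at_level D M U1 + (c2 * G U2) *+ at_level D M U2.
Proof.
move=> lead_p; rewrite (big_fset_incl _ (fsubsetUl (msupp p) [fset U1; U2]%fset)); last first.
  by move=> u _ /mcoeff_outdom ->; rewrite mul0r mul0rn.
transitivity (\sum_(u <- (msupp p `|` [fset U1; U2])%fset)
  ((c1 * G u) *+ at_level D M u *+ (u == U1) + (c2 * G u) *+ at_level D M u *+ (u == U2))).
  apply: eq_bigr => u _; case L: (at_level D M u); last by rewrite /= !mulr0n !mul0rn addr0.
  by rewrite lead_p // mulrDl !mulrnAl /= !mulr1n.
by rewrite big_split /= !big_mulrn_eq ?fset_uniq // !inE !eqxx !orbT /= !mulr1n.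
Qed.

Lemma lead_pair_wcomm p q Dp Dq Mp Mq U1 U2 V1 V2 c1 c2 e1 e2 w :
  filtered p Dp Mp -> filtered q Dq Mq -> (2 <= Dp + Dq)%N -> (2 <= Mp + Mq)%N ->
  lead_pair p Dp Mp U1 U2 c1 c2 -> lead_pair q Dq Mq V1 V2 e1 e2 ->
  at_level Dp Mp U1 -> at_level Dp Mp U2 -> at_level Dq Mq V1 -> at_level Dq Mq V2 ->
  at_level (Dp + Dq - 2) (Mp + Mq - 2) w ->
  (wcomm p q)@_w = c1 * e1 * pbracket J U1 V1 w + c1 * e2 * pbracket J U1 V2 w
                 + c2 * e1 * pbracket J U2 V1 w + c2 * e2 * pbracket J U2 V2 w.
Proof.
move=> fp fq D2 M2 lead_p lead_q lU1 lU2 lV1 lV2 lw.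
rewrite (mcoeff_wcomm_lead fp fq D2 M2 lw).
transitivity (\sum_(u <- msupp p) (p@_u *
  \sum_(v <- msupp q) (q@_v * pbracket J u v w) *+ at_level Dq Mq v) *+ at_level Dp Mp u).
  apply: eq_bigr => u _; case: (at_level Dp Mp u); rewrite /= ?mulr0n.
    by rewrite mulr1n mulr_sumr; apply: eq_bigr => v _; rewrite mulrnAr mulrA.
  by rewrite big1 // => v _; rewrite mulr0n.
rewrite (sum_lead_pair _ lead_p) lU1 lU2 !mulr1n !(sum_lead_pair _ lead_q) lV1 lV2 !mulr1n.
by rewrite !mulrDr !mulrA addrA.
Qed.

End Filtration.

Section Swap.
Variables (C : numClosedFieldType) (n : nat) (J : pred 'I_n).
Local Notation idx := (widx n).
Local Notation W := (weyl C n).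

(* The index of (a^u)^dag. *)
Definition swap (u : idx) : idx := (u.2, u.1).

Lemma swapK : involutive swap. Proof. by case. Qed.

Lemma swap_eq u v : (swap u == v) = (u == swap v).
Proof. exact: (can2_eq swapK swapK). Qed.

Lemma contract_swap u v k : swap (contract u v k) = contract (swap u) (swap v) k.
Proof. by []. Qed.

Lemma swap_contract_swap u k : swap (contract u (swap u) k) = contract u (swap u) k.
Proof. by rewrite contract_swap swapK contractC. Qed.

Lemma wsize_swap u : wsize (swap u) = wsize u.
Proof. by rewrite /wsize addnC. Qed.

Lemma wsize_on_swap u : wsize_on J (swap u) = wsize_on J u.
Proof. by apply: eq_bigr => i _; rewrite addnC. Qed.

Lemma at_level_swap D M u : at_level J D M (swap u) = at_level J D M u.
Proof. by rewrite /at_level wsize_swap wsize_on_swap. Qed.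

Lemma pbcoef_id (u : idx) j : pbcoef u u j = 0 :> C.
Proof. by rewrite /pbcoef mulnC subrr. Qed.

Lemma pbcoefC (u v : idx) j : pbcoef v u j = - pbcoef u v j :> C.
Proof. by rewrite /pbcoef opprB. Qed.

Lemma pbcoef_swap (u v : idx) j : pbcoef (swap u) (swap v) j = - pbcoef u v j :> C.
Proof. by rewrite /pbcoef /= opprB mulnC [(tnth v.1 j * _)%N]mulnC. Qed.

Lemma pbracket_id (u w : idx) : pbracket J u u w = 0 :> C.
Proof. by rewrite /pbracket big1 // => j _; rewrite pbcoef_id mul0rn. Qed.

Lemma pbracketC (u v w : idx) : pbracket J v u w = - pbracket J u v w :> C.
Proof. by rewrite /pbracket -sumrN; apply: eq_bigr => j _; rewrite pbcoefC contractC mulNrn. Qed.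

Lemma pbracket_swap (u v w : idx) :
  pbracket J (swap u) (swap v) w = - pbracket J u v (swap w) :> C.
Proof.
rewrite /pbracket -sumrN; apply: eq_bigr => j _.
by rewrite pbcoef_swap -contract_swap swap_eq mulNrn.
Qed.

Lemma lead_wcomm_swap_pair (p m : W) D M U xp xm yp ym w :
  filtered J p D M -> filtered J m D M -> (2 <= M <= D)%N ->
  lead_pair J p D M U (swap U) xp xm -> lead_pair J m D M U (swap U) yp ym ->
  at_level J D M U -> at_level J (D + D - 2) (M + M - 2) w ->
  (wcomm p m)@_w = (xp * ym - xm * yp) * pbracket J U (swap U) w.
Proof.
move=> fp fm /andP[M2 MD] lp lm lU lw.
have lU' : at_level J D M (swap U) by rewrite at_level_swap.
have D2 : (2 <= D + D)%N by lia.
have M2' : (2 <= M + M)%N by lia.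
rewrite (lead_pair_wcomm fp fm D2 M2' lp lm lU lU' lU lU' lw).
by rewrite !pbracket_id (pbracketC U (swap U)); ring.
Qed.

(* Reflecting through swap, the term of swap U is the mirror image of that of U. *)
Lemma lead_wcomm_swap_fixed (q c : W) D M Dc Mc U T0 T1 x1 x2 e1 e2 w :
  filtered J q D M -> filtered J c Dc Mc -> (2 <= D + Dc)%N -> (2 <= M + Mc)%N ->
  lead_pair J q D M U (swap U) x1 x2 -> lead_pair J c Dc Mc T0 T1 e1 e2 ->
  at_level J D M U -> at_level J Dc Mc T0 -> at_level J Dc Mc T1 ->
  swap T0 = T0 -> swap T1 = T1 -> at_level J (D + Dc - 2) (M + Mc - 2) w ->
  (wcomm q c)@_w = x1 * (e1 * pbracket J U T0 w + e2 * pbracket J U T1 w)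
                 - x2 * (e1 * pbracket J U T0 (swap w) + e2 * pbracket J U T1 (swap w)).
Proof.
move=> fq fc D2 M2 lq lc lU lT0 lT1 sT0 sT1 lw.
have lU' : at_level J D M (swap U) by rewrite at_level_swap.
rewrite (lead_pair_wcomm fq fc D2 M2 lq lc lU lU' lT0 lT1 lw).
by rewrite -{2}sT0 -{2}sT1 !pbracket_swap; ring.
Qed.

End Swap.

(* Degrees along the chain: [p, [p, m]] has degree D + (2 D - 2) - 2 = 3 D - 4. *)
Fixpoint chain_deg (d l : nat) : nat :=
  if l is l'.+1 then let x := chain_deg d l' in (x + (x + x - 2) - 2)%N else d.

Lemma chain_degE d l : (2 <= d)%N -> chain_deg d l = (3 ^ l * (d - 2) + 2)%N.
Proof.
move=> d2; elim: l => [|l IHl] /=; first by rewrite expn0 mul1n; lia.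
by rewrite IHl expnS -mulnA; set x := (3 ^ l * (d - 2))%N; lia.
Qed.

Section Generators.
Variables (C : numClosedFieldType) (n : nat).
Local Notation idx := (widx n).
Local Notation W := (weyl C n).

Lemma wdag_wbasis (g : idx) : wdag (wbasis C g) = << 1 *g swap g >>.
Proof. by rewrite /wdag /wbasis msuppU oner_eq0 big_seq_fset1 mcoeffUU conjC1. Qed.

Lemma mcoeff_gplus (g u : idx) : (gplus C g)@_u = 'i *+ (u == g) + 'i *+ (u == swap g).
Proof.
transitivity ('i * ((<< 1 *g swap g >> : W)@_u + (<< 1 *g g >> : W)@_u)).
  by rewrite /gplus wdag_wbasis /wbasis -mcoeffD; apply: mcoeffZ.
by rewrite !mcoeffU mulrDr !mulr_natr addrC (eq_sym g) (eq_sym (swap g)).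
Qed.

Lemma mcoeff_gminus (g u : idx) : (gminus C g)@_u = -1 *+ (u == g) + 1 *+ (u == swap g).
Proof.
transitivity ((<< 1 *g swap g >> : W)@_u - (<< 1 *g g >> : W)@_u).
  by rewrite /gminus wdag_wbasis /wbasis; apply: mcoeffB.
by rewrite !mcoeffU addrC mulNrn (eq_sym g) (eq_sym (swap g)).
Qed.

Lemma filtered_pair J (q : W) (g : idx) a b :
  (forall u, q@_u = a *+ (u == g) + b *+ (u == swap g)) ->
  filtered J q (wsize g) (wsize_on J g).
Proof.
move=> qE u; rewrite qE; have [->|_] := eqVneq u g; first by split.
have [->|_] := eqVneq u (swap g); last by rewrite !mulr0n addr0 eqxx.
by rewrite wsize_swap wsize_on_swap.
Qed.

End Generators.

Section Chain.
Variables (C : numClosedFieldType) (n : nat) (J : pred 'I_n) (P : pred (widx n)).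
Local Notation idx := (widx n).
Local Notation W := (weyl C n).

(* The bracket of a^U with a^(swap U) has a leading pair on swap-invariant T0, T1,
   and bracketing a^U once more with it leaves a multiple of a single a^U2. *)
Definition double_bracket_step (U : idx) (D M : nat) : Prop :=
  exists (T0 T1 : idx) (d e : C) (U2 : idx) (h : C),
  [/\ at_level J (D + D - 2) (M + M - 2) T0, at_level J (D + D - 2) (M + M - 2) T1,
      swap T0 = T0, swap T1 = T1 &
      forall w, pbracket J U (swap U) w = d *+ (w == T0) + e *+ (w == T1)] /\
  [/\ P U2, at_level J (chain_deg D 1) (chain_deg M 1) U2, h != 0 &
      forall w, d * pbracket J U T0 w + e * pbracket J U T1 w = h *+ (w == U2)].

Hypothesis P_weight : forall U, P U -> (2 <= wsize_on J U)%N.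
Hypothesis P_asym : forall U, P U -> U != swap U.
Hypothesis P_step : forall U D M, P U -> at_level J D M U -> double_bracket_step U D M.

Definition chain_inv (p m : W) (D M : nat) :=
  exists U (xp xm yp ym : C),
  [/\ filtered J p D M, filtered J m D M, lead_pair J p D M U (swap U) xp xm,
      lead_pair J m D M U (swap U) yp ym & at_level J D M U] /\
  [/\ P U, xp != 0, yp != 0 & xp * ym - xm * yp != 0].

Lemma chain_inv_step p m D M : chain_inv p m D M ->
  chain_inv (wcomm p (wcomm p m)) (wcomm m (wcomm p m)) (chain_deg D 1) (chain_deg M 1).
Proof.
case=> U [xp [xm [yp [ym [[fp fm lp lm lU] [PU xp0 yp0 K0]]]]]].
have M2 : (2 <= M)%N by case/andP: lU => _ /eqP <-; apply: P_weight.
have MD : (M <= D)%N by case/andP: lU => /eqP <- /eqP <-; apply: wsize_on_le.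
have [T0 [T1 [d [e [U2 [h [[lT0 lT1 sT0 sT1 bracketU] [PU2 lU2 h0 bracketT]]]]]]]] :=
  P_step PU lU.
have M2D : (2 <= M <= D)%N by rewrite M2 MD.
set c := wcomm p m; set K := xp * ym - xm * yp.
have fc : filtered J c (D + D - 2) (M + M - 2) by apply: filtered_wcomm.
have lc : lead_pair J c (D + D - 2) (M + M - 2) T0 T1 (K * d) (K * e).
  move=> w lw; rewrite (lead_wcomm_swap_pair fp fm M2D lp lm lU lw).
  by rewrite bracketU mulrDr !mulrnAr.
have lead_next q x1 x2 : filtered J q D M -> lead_pair J q D M U (swap U) x1 x2 ->
    lead_pair J (wcomm q c) (chain_deg D 1) (chain_deg M 1) U2 (swap U2)
      (x1 * (K * h)) (- x2 * (K * h)).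
  move=> fq lq w lw.
  rewrite (lead_wcomm_swap_fixed fq fc _ _ lq lc lU lT0 lT1 sT0 sT1 lw); try lia.
  by rewrite -!mulrA -!mulrDr !bracketT swap_eq !mulrnAr mulNr mulNrn.
exists U2, (xp * (K * h)), (- xm * (K * h)), (yp * (K * h)), (- ym * (K * h)).
split; split.
- exact: filtered_wcomm fp fc.
- exact: filtered_wcomm fm fc.
- exact: lead_next fp lp.
- exact: lead_next fm lm.
- exact: lU2.
- exact: PU2.
- by rewrite !mulf_neq0.
- by rewrite !mulf_neq0.
have -> : xp * (K * h) * (- ym * (K * h)) - (- xm * (K * h)) * (yp * (K * h))
    = - (K * h) ^+ 2 * K by rewrite /K; ring.
by rewrite mulf_neq0 // oppr_eq0 expf_neq0 // mulf_neq0.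
Qed.

Lemma chain_inv_chainII p m D M l : chain_inv p m D M ->
  chain_inv (chainII p m l).1 (chainII p m l).2 (chain_deg D l) (chain_deg M l).
Proof.
move=> inv0; elim: l => [|l] //=.
by case: (chainII p m l) => p' m' /=; apply: chain_inv_step.
Qed.

Lemma wdeg_filtered (p : W) D M U :
  filtered J p D M -> p@_U != 0 -> wsize U = D -> wdeg p = Some D.
Proof.
move=> fp pU size_U; rewrite /wdeg ifF; last by apply: contraNF pU => /eqP ->; rewrite mcoeff0.
congr Some; apply/eqP; rewrite eqn_leq; apply/andP; split.
  by apply/bigmax_leqP_seq => u; rewrite -mcoeff_neq0 => /fp[].
by rewrite -size_U; apply: leq_bigmax_seq; rewrite -?mcoeff_neq0.
Qed.

Lemma wdeg_chain_inv p m D M : chain_inv p m D M -> wdeg p = Some D /\ wdeg m = Some D.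
Proof.
case=> U [xp [xm [yp [ym [[fp fm lp lm lU] [PU xp0 yp0 _]]]]]].
have size_U : wsize U = D by case/andP: lU => /eqP.
have coefU (q : W) (x1 x2 : C) : lead_pair J q D M U (swap U) x1 x2 -> q@_U = x1.
  by move/(_ U lU); rewrite eqxx (negbTE (P_asym PU)) addr0.
split; first by apply: (wdeg_filtered fp _ size_U); rewrite (coefU _ _ _ lp).
by apply: (wdeg_filtered fm _ size_U); rewrite (coefU _ _ _ lm).
Qed.

Lemma chain_inv_gen g : P g -> chain_inv (gplus C g) (gminus C g) (wsize g) (wsize_on J g).
Proof.
move=> Pg; exists g, 'i, 'i, (-1), 1; split; split => //.
- exact: filtered_pair (mcoeff_gplus C g).
- exact: filtered_pair (mcoeff_gminus C g).
- by move=> u _; apply: mcoeff_gplus.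
- by move=> u _; apply: mcoeff_gminus.
- by rewrite /at_level !eqxx.
- exact: neq0Ci.
- by rewrite oppr_eq0 oner_eq0.
have -> : 'i * 1 - 'i * -1 = 2%:R * 'i :> C by ring.
by rewrite mulf_neq0 ?pnatr_eq0 ?neq0Ci.
Qed.

Lemma wdeg_chainII g l : P g ->
  let y := chainII (gplus C g) (gminus C g) l in
  wdeg y.1 = Some (3 ^ l * (wsize g - 2) + 2)%N /\
  wdeg y.2 = Some (3 ^ l * (wsize g - 2) + 2)%N.
Proof.
move=> Pg /=; rewrite -chain_degE; last exact: leq_trans (P_weight Pg) (wsize_on_le J g).
exact: wdeg_chain_inv (chain_inv_chainII l (chain_inv_gen Pg)).
Qed.

End Chain.

Lemma big_pred2 (R : Type) (idx : R) (op : Monoid.com_law idx) (I : finType) (i j : I)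
    (F : I -> R) : i != j ->
  \big[op/idx]_(k | pred2 i j k) F k = op (F i) (F j).
Proof.
move=> ne_ij; rewrite (bigD1 i) /= ?eqxx //; congr (op _ _).
rewrite (eq_bigl (pred1 j)) ?big_pred1_eq // => k /=.
by have [->|_] := eqVneq k i; rewrite /= ?andbT // (negbTE ne_ij).
Qed.

Section ModeComputations.
Variables (C : numClosedFieldType) (n : nat).
Local Notation idx := (widx n).

Lemma swap_neq (U : idx) j : tnth U.1 j != tnth U.2 j -> U != swap U.
Proof. by apply: contra => /eqP eq_U; rewrite [in X in tnth X.1]eq_U. Qed.

Lemma wsize_on_pred1 (u : idx) j : wsize_on (pred1 j) u = (tnth u.1 j + tnth u.2 j)%N.
Proof. exact: big_pred1_eq. Qed.

Lemma wsize_on_pred2 (u : idx) j j' : j != j' ->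
  wsize_on (pred2 j j') u = (tnth u.1 j + tnth u.2 j + (tnth u.1 j' + tnth u.2 j'))%N.
Proof. exact: big_pred2. Qed.

Lemma pbracket_pred1 (u v w : idx) j :
  pbracket (pred1 j) u v w = pbcoef u v j *+ (contract u v (single j) == w) :> C.
Proof. exact: big_pred1_eq. Qed.

Lemma pbracket_pred2 (u v w : idx) j j' : j != j' ->
  pbracket (pred2 j j') u v w = pbcoef u v j *+ (contract u v (single j) == w)
                                + pbcoef u v j' *+ (contract u v (single j') == w) :> C.
Proof. exact: big_pred2. Qed.

Lemma pbcoef_swap_neq0 (U : idx) j : tnth U.1 j != tnth U.2 j -> pbcoef U (swap U) j != 0 :> C.
Proof. by rewrite /pbcoef /= subr_eq0 eqr_nat; apply: contra => /eqP sq; apply/eqP; nia. Qed.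

Lemma pbcoef_contract_self (U : idx) j : (tnth U.1 j + tnth U.2 j = 1)%N ->
  pbcoef U (contract U (swap U) (single j)) j = 0 :> C.
Proof.
move=> sum1; rewrite /pbcoef !tnth_mktuple /single eqxx /= sum1 addnC sum1.
by rewrite subnn muln0 mul0n subrr.
Qed.

Lemma pbcoef_contract_other (U : idx) i j : i != j -> (tnth U.1 j + tnth U.2 j = 1)%N ->
  pbcoef U (contract U (swap U) (single i)) j = pbcoef U (swap U) j :> C.
Proof.
move=> ne_ij sum1; rewrite /pbcoef !tnth_mktuple /single eq_sym (negbTE ne_ij) /= !subn0.
by congr (_%:R - _%:R); nia.
Qed.

End ModeComputations.

Section UnbalancedMode.
Variables (C : numClosedFieldType) (n : nat) (j0 : 'I_n).
Local Notation idx := (widx n).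

Definition unbalanced_mode (U : idx) :=
  (tnth U.1 j0 != tnth U.2 j0) && (2 <= tnth U.1 j0 + tnth U.2 j0)%N.

Lemma unbalanced_weight U : unbalanced_mode U -> (2 <= wsize_on (pred1 j0) U)%N.
Proof. by rewrite wsize_on_pred1 => /andP[]. Qed.

Lemma unbalanced_asym U : unbalanced_mode U -> U != swap U.
Proof. by case/andP => /swap_neq. Qed.

Lemma unbalanced_step U D M : unbalanced_mode U -> at_level (pred1 j0) D M U ->
  double_bracket_step C (pred1 j0) unbalanced_mode U D M.
Proof.
move=> /andP[neq_AB AB2] lU; set T := contract U (swap U) (single j0).
have TA : tnth T.1 j0 = (tnth U.1 j0 + tnth U.2 j0 - 1)%N by rewrite tnth_mktuple /single eqxx.
have TB : tnth T.2 j0 = (tnth U.2 j0 + tnth U.1 j0 - 1)%N by rewrite tnth_mktuple /single eqxx.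
have lT : at_level (pred1 j0) (D + D - 2) (M + M - 2) T.
  by apply: at_level_contract1; rewrite /= ?eqxx ?at_level_swap //; lia.
exists T, T, (pbcoef U (swap U) j0), 0, (contract U T (single j0)),
  (pbcoef U (swap U) j0 * pbcoef U T j0).
split; split => //; try exact: swap_contract_swap.
- by move=> w; rewrite pbracket_pred1 mul0rn addr0 eq_sym.
- by rewrite /unbalanced_mode !tnth_mktuple /single eqxx /=; apply/andP; split; [apply/eqP|]; lia.
- by apply: at_level_contract1; rewrite /= ?eqxx ?TA ?TB //; lia.
- rewrite mulf_neq0 ?pbcoef_swap_neq0 // /pbcoef TA TB subr_eq0 eqr_nat.
  by apply/eqP; move/eqP: neq_AB; nia.
- by move=> w; rewrite pbracket_pred1 mul0r addr0 mulrnAr eq_sym.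
Qed.

End UnbalancedMode.

Section UnitModes.
Variables (C : numClosedFieldType) (n : nat) (j0 j1 : 'I_n).
Hypothesis neq_j01 : j0 != j1.
Local Notation idx := (widx n).
Local Notation J := (pred2 j0 j1).

Definition unit_modes (U : idx) :=
  (tnth U.1 j0 + tnth U.2 j0 == 1)%N && (tnth U.1 j1 + tnth U.2 j1 == 1)%N.

Lemma unit_modes_weight U : unit_modes U -> (2 <= wsize_on J U)%N.
Proof. by rewrite wsize_on_pred2 // => /andP[/eqP -> /eqP ->]. Qed.

Lemma unit_modes_asym U : unit_modes U -> U != swap U.
Proof.
case/andP => /eqP sum1 _; apply: (@swap_neq n U j0); apply/eqP => eq_j0.
by move: sum1; rewrite eq_j0 addnn => /(congr1 odd); rewrite odd_double.
Qed.

Lemma unit_modes_step U D M : unit_modes U -> at_level J D M U ->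
  double_bracket_step C J unit_modes U D M.
Proof.
move=> /andP[/eqP sum0 /eqP sum1] lU; have neq_j10 : j1 != j0 by rewrite eq_sym.
set T0 := contract U (swap U) (single j0); set T1 := contract U (swap U) (single j1).
set U2 := contract U T0 (single j1).
have U2C : contract U T1 (single j0) = U2.
  congr pair; apply: eq_mktuple => i; rewrite !tnth_mktuple /single /=.
    have [->|_] := eqVneq i j0; rewrite ?(negbTE neq_j01) ?eqxx /=; first lia.
    by have [->|_] := eqVneq i j1; rewrite ?eqxx /=; lia.
  have [->|_] := eqVneq i j0; rewrite ?(negbTE neq_j01) ?eqxx /=; first lia.
  by have [->|_] := eqVneq i j1; rewrite ?eqxx /=; lia.
have lT j : J j -> (tnth U.1 j + tnth U.2 j = 1)%N ->
    at_level J (D + D - 2) (M + M - 2) (contract U (swap U) (single j)).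
  by move=> Jj sum; apply: at_level_contract1; rewrite /= ?at_level_swap // ?sum // addnC sum.
pose d : C := pbcoef U (swap U) j0; pose e : C := pbcoef U (swap U) j1.
have d0 : d != 0 by apply: pbcoef_swap_neq0; apply/eqP; lia.
have e0 : e != 0 by apply: pbcoef_swap_neq0; apply/eqP; lia.
have lT0 : at_level J (D + D - 2) (M + M - 2) T0 by apply: lT; rewrite /= ?eqxx.
have lT1 : at_level J (D + D - 2) (M + M - 2) T1 by apply: lT; rewrite /= ?eqxx ?orbT.
exists T0, T1, d, e, U2, (d * e + e * d).
split; split => //; try exact: swap_contract_swap.
- by move=> w; rewrite pbracket_pred2 // !(eq_sym w).
- rewrite /unit_modes !tnth_mktuple /single !eqxx (negbTE neq_j01) (negbTE neq_j10) /=.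
  by apply/andP; split; apply/eqP; lia.
- apply: at_level_contract1; rewrite /= ?eqxx ?orbT //.
  1,2: by rewrite !tnth_mktuple /single (negbTE neq_j10) /=; lia.
- have -> : d * e + e * d = 2%:R * (d * e) by ring.
  by rewrite !mulf_neq0 ?pnatr_eq0.
move=> w; rewrite !pbracket_pred2 // U2C !pbcoef_contract_self // !mul0rn add0r addr0.
by rewrite !pbcoef_contract_other // -/U2 -/d -/e (eq_sym w) !mulrnAr -mulrnDl.
Qed.

End UnitModes.

Theorem proposition9 (C : numClosedFieldType) (n : nat) (hn : (0 < n)%N)
    (al be : n.-tuple nat) (hlex : lex_ge al be)
    (hab : (exists k : 'I_n, (2 <= tnth al k + tnth be k)%N /\ tnth al k <> tnth be k)
        \/ (exists k k' : 'I_n, k <> k' /\ (tnth al k + tnth be k = 1)%N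
                                 /\ (tnth al k' + tnth be k' = 1)%N)) :
  forall l : nat,
    let y := chainII (gplus C (al, be)) (gminus C (al, be)) l in
    wdeg y.1 = Some (3 ^ l * (wsize (al, be) - 2) + 2)%N /\
    wdeg y.2 = Some (3 ^ l * (wsize (al, be) - 2) + 2)%N.
Proof.
move=> l; case: hab => [[k [k2 neq_k]] | [k [k' [neq_kk' [k1 k'1]]]]].
  apply: (wdeg_chainII (@unbalanced_weight n k) (@unbalanced_asym n k)
                       (@unbalanced_step C n k)).
  by apply/andP; split => //; apply/eqP.
have neq_kk'b : k != k' by apply/eqP.
apply: (wdeg_chainII (@unit_modes_weight n k k' neq_kk'b) (@unit_modes_asym n k k')
                     (@unit_modes_step C n k k' neq_kk'b)).
by apply/andP; split; apply/eqP.
Qed.
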